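(* Let $q$ be a prime power, $e\ge 2$, $r$ a positive integer, $a\in\mathbb{F}_{q^e}$ with $a\neq 0$, $f(x)=x^r(x^{q-1}+a)$, and $\ell=q^{e-1}+\cdots+q+1$. Suppose $(-a)^{\ell}\neq 1$ and $\gcd(r,q-1)=1$. (i) If $r\bmod\ell\in\{1,\ell-q\}$, then $f(x)$ permutes $\mathbb{F}_{q^e}$. (ii) If $e$ is odd and $r\bmod \ell\in\{q^{(e+1)/2}+1,\ \ell-q^{(e+1)/2}-q\}$, then $f(x)$ permutes $\mathbb{F}_{q^e}$.
   Context: $r\bmod\ell$ denotes the least nonnegative residue of $r$ modulo $\ell$. *)

From mathcomp Require Import all_boot all_algebra.
Set Implicit Arguments. Unset Strict Implicit. Unset Printing Implicit Defensive.
Import GRing.Theory.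
Local Open Scope ring_scope.

Definition fpoly (F : fieldType) (q r : nat) (a : F) (x : F) : F :=
  x ^+ r * (x ^+ q.-1 + a).

Definition ell (q e : nat) : nat := (\sum_(i < e) q ^ i)%N.

(* For x != 0, x^(q-1) is an l-th root of unity, so f(x)^(q-1) only depends on
   r mod l.  As gcd(r, q-1) = 1 and f has no nonzero root, f is a permutation as
   soon as f(x)^(q-1) determines x^(q-1).  Put K = (e+1)/2.  In each of the four
   cases f(x)^(q-1) = T(x^(+-m))^(q-1) with (j, m) = (1, 1) or (K, q^K + 1), where
   T(z) = b z^(q^j) + c z is F_q-linear with trivial kernel because (-a)^l <> 1.
   Equal (q-1)-th powers of T-values force x^m and y^m to differ by a factor in
   F_q^*, so s = (x/y)^(q-1) is an l-th root of unity with s^m = 1.  Then s = 1: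
   trivially when m = 1, and when m = q^K + 1 because s^(q^K) = s^-1 and
   q^(2K) = q^(e+1) give s^q = s, hence s^2 = s^(q^K + 1) = 1 while l is odd. *)

From mathcomp Require Import all_boot all_algebra all_field.
From mathcomp Require Import ring zify.
Set Implicit Arguments. Unset Strict Implicit. Unset Printing Implicit Defensive.
Import GRing.Theory.
Local Open Scope ring_scope.

Lemma expr_coprime_eq1 (R : nzRingType) (z : R) m n :
  (0 < n)%N -> coprime m n -> z ^+ n = 1 -> z ^+ m = 1 -> z = 1.
Proof.
move=> n_gt0 co_mn zn1 zm1; have [d zd _] := prim_order_exists n_gt0 zn1.
have : (d %| gcdn m n)%N by rewrite dvdn_gcd !(prim_order_dvd zd) zm1 zn1 eqxx.
by rewrite (eqP co_mn) dvdn1 => /eqP d1; rewrite -(prim_expr_order zd) d1 expr1.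
Qed.

Lemma expr_expn_fixed (R : nzRingType) (z : R) q j :
  (0 < q)%N -> z ^+ q.-1 = 1 -> z ^+ (q ^ j) = z.
Proof.
move=> q_gt0 zq1; elim: j => [|j IHj]; first by rewrite expr1.
by rewrite expnSr exprM IHj -(prednK q_gt0) exprS zq1 mulr1.
Qed.

Lemma fpoly_scale (R : fieldType) q r (a d x : R) :
  d ^+ q.-1 = 1 -> fpoly q r a (d * x) = d ^+ r * fpoly q r a x.
Proof. by move=> dq1; rewrite /fpoly !exprMn dq1 mul1r mulrA. Qed.

Lemma ellS q n : ell q n.+1 = (ell q n + q ^ n)%N.
Proof. by rewrite /ell big_ord_recr. Qed.

Lemma odd_ell q n : odd (ell q n) = (if odd q then odd n else (0 < n)%N).
Proof.
elim: n => [|n IHn]; first by rewrite /ell big_ord0; case: (odd q).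
rewrite ellS oddD oddX IHn; case: (odd q); case: n {IHn} => //= n.
by rewrite addbT.
Qed.

Lemma expn_add_le_ell q i j n : (i < j < n)%N -> (q ^ i + q ^ j <= ell q n)%N.
Proof.
case/andP=> lt_ij lt_jn; have lt_in := ltn_trans lt_ij lt_jn.
rewrite /ell (bigD1 (Ordinal lt_jn)) //= (bigD1 (Ordinal lt_in)) /=; last first.
  by rewrite -val_eqE /= ltn_eqF.
by rewrite addnCA addnA leq_addr.
Qed.

Section LinearizedBinomial.
Variables (R : fieldType) (q : nat).
Hypothesis q_char : [pchar R].-nat q.

Definition linq j (b c z : R) := b * z ^+ (q ^ j) + c * z.

Let q_gt0 : (0 < q)%N. Proof. by case/andP: q_char. Qed.

Lemma linqB j b c : {morph linq j b c : u v / u - v}.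
Proof.
have qj_char : [pchar R].-nat (q ^ j)%N by rewrite pnatX q_char.
by move=> u v; rewrite /linq exprDn_pchar // exprNn_pchar //; ring.
Qed.

Lemma linq_scale j b c d z :
  d ^+ q.-1 = 1 -> linq j b c (d * z) = d * linq j b c z.
Proof. by move=> dq1; rewrite /linq exprMn (expr_expn_fixed _ q_gt0 dq1); ring. Qed.

Lemma linq_eq0 j b c z :
  z != 0 -> linq j b c z = 0 -> b * z ^+ (q ^ j).-1 = - c.
Proof.
move=> z_neq0; have qj_gt0 : (0 < q ^ j)%N by rewrite expn_gt0 q_gt0.
have -> : linq j b c z = z * (b * z ^+ (q ^ j).-1 + c).
  by rewrite /linq -[in LHS](prednK qj_gt0) exprS; ring.
by move/eqP; rewrite mulf_eq0 (negbTE z_neq0) addr_eq0 => /eqP.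
Qed.

Lemma linq_inj j b c :
  (forall z, z != 0 -> linq j b c z != 0) -> injective (linq j b c).
Proof.
move=> ker_linq u v Euv; apply/eqP; rewrite -subr_eq0; apply/negPn/negP.
by move/ker_linq; rewrite linqB Euv subrr eqxx.
Qed.

Lemma linq_expr_eq j b c u v :
  injective (linq j b c) -> v != 0 ->
  linq j b c u ^+ q.-1 = linq j b c v ^+ q.-1 ->
  exists2 d, d ^+ q.-1 = 1 & u = d * v.
Proof.
move=> inj_linq v_neq0 Euv.
have linq0 : linq j b c 0 = 0.
  by rewrite /linq expr0n expn_eq0 eqn0Ngt q_gt0 /= !mulr0 addr0.
have Lv_neq0 : linq j b c v != 0.
  by apply: contra_neq v_neq0 => Lv0; apply: inj_linq; rewrite Lv0 linq0.
have dq1 : (linq j b c u / linq j b c v) ^+ q.-1 = 1.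
  by rewrite expr_div_n Euv divff // expf_neq0.
exists (linq j b c u / linq j b c v) => //.
by apply: inj_linq; rewrite linq_scale ?divfK.
Qed.

End LinearizedBinomial.

Section FiniteField.
Variables (F : finFieldType) (q e : nat).
Hypotheses (q_gt1 : (1 < q)%N) (q_char : [pchar F].-nat q) (cardF : #|F| = (q ^ e)%N).

Local Notation L := (ell q e).

Let q_gt0 : (0 < q)%N. Proof. exact: ltnW. Qed.

Lemma expr_card (x : F) : x ^+ (q ^ e) = x.
Proof. by rewrite -cardF expf_card. Qed.

Lemma expr_ell (x : F) : x != 0 -> x ^+ (q.-1 * L) = 1.
Proof.
move=> x_neq0; apply: (mulfI x_neq0).
by rewrite mulr1 -exprS /ell -predn_exp prednK ?expn_gt0 ?q_gt0 // expr_card.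
Qed.

Lemma expr_ell_expn j (x : F) : x != 0 -> x ^+ ((q ^ j).-1 * L) = 1.
Proof. by move=> x_neq0; rewrite predn_exp mulnAC exprM expr_ell // expr1n. Qed.

Lemma expr_mod_ell n n' (x : F) :
  x != 0 -> (n = n' %[mod L])%N -> x ^+ (n * q.-1) = x ^+ (n' * q.-1).
Proof.
move=> x_neq0 nn'.
have reduce k : x ^+ (k * q.-1) = x ^+ ((k %% L) * q.-1).
  rewrite {1}(divn_eq k L) mulnDl exprD mulnAC -mulnA (mulnC (k %/ L)%N) exprM.
  by rewrite expr_ell // expr1n mul1r.
by rewrite reduce nn' -reduce.
Qed.

Lemma fpoly_expr_mod r r' (a x : F) :
  x != 0 -> (r = r' %[mod L])%N ->
  fpoly q r a x ^+ q.-1 = fpoly q r' a x ^+ q.-1.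
Proof.
by move=> x_neq0 rr'; rewrite /fpoly !exprMn -!exprM (expr_mod_ell x_neq0 rr').
Qed.

Lemma fpoly_expr_opp r n (a x : F) :
  x != 0 -> (r + n = 0 %[mod L])%N ->
  fpoly q r a x ^+ q.-1 = (x^-1 ^+ n * (x ^+ q.-1 + a)) ^+ q.-1.
Proof.
move=> x_neq0 rn; rewrite /fpoly !exprMn -!exprM; congr (_ * _).
apply: (mulIf (expf_neq0 (n * q.-1) x_neq0)).
rewrite -exprD -mulnDl (expr_mod_ell x_neq0 rn) mul0n expr0.
by rewrite exprVn mulVf ?expf_neq0.
Qed.

Lemma expr_pred_eq_of_scaled_expr m (x y d : F) :
  (forall s : F, s ^+ L = 1 -> s ^+ m = 1 -> s = 1) ->
  x != 0 -> y != 0 -> d ^+ q.-1 = 1 -> x ^+ m = d * y ^+ m ->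
  x ^+ q.-1 = y ^+ q.-1.
Proof.
move=> ell_root_m x_neq0 y_neq0 dq1 xy.
have xy_neq0 : x / y != 0 by rewrite mulf_neq0 ?invr_neq0.
rewrite -{1}(divfK y_neq0 x) exprMn (ell_root_m ((x / y) ^+ q.-1)) ?mul1r //.
  by rewrite -exprM expr_ell.
by rewrite -exprM mulnC exprM expr_div_n xy mulfK ?expf_neq0.
Qed.

Lemma expr_shift1 (x : F) : x ^+ (1 * q ^ 1) = x ^+ (1 + q.-1).
Proof. by rewrite mul1n expn1 add1n prednK. Qed.

Lemma expr_shift_half K :
  (K + K = e.+1)%N ->
  forall x : F, x ^+ ((q ^ K + 1) * q ^ K) = x ^+ (q ^ K + 1 + q.-1).
Proof.
move=> KK x; rewrite mulnDl mul1n -expnD KK expnS mulnC exprD exprM expr_card.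
by rewrite -exprD (addnC q) -addnA add1n prednK.
Qed.

Lemma ell_root_eq1_half K (s : F) :
  odd L -> (K + K = e.+1)%N -> s ^+ L = 1 -> s ^+ (q ^ K + 1) = 1 -> s = 1.
Proof.
move=> L_odd KK sL sK.
have sq1 : s ^+ q.-1 = 1.
  have := congr1 (fun t => t ^+ (q ^ K)) sK.
  by rewrite expr1n -exprM expr_shift_half // exprD sK mul1r.
have s2 : s ^+ 2 = 1 by rewrite -[RHS]sK exprD expr_expn_fixed // expr1 expr2.
by apply: (expr_coprime_eq1 _ _ s2 sL); rewrite ?coprimen2.
Qed.

Variables (r : nat) (a : F).
Hypotheses (r_gt0 : (0 < r)%N) (r_coprime : coprime r q.-1) (a_ell : (- a) ^+ L != 1).

Local Notation f := (fpoly q r a).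

Lemma fpoly_neq0 x : x != 0 -> f x != 0.
Proof.
move=> x_neq0; rewrite /fpoly mulf_neq0 ?expf_neq0 //.
by apply: contra a_ell; rewrite addr_eq0 => /eqP <-; rewrite -exprM expr_ell.
Qed.

Lemma fpoly_bij_crit :
  (forall x y, x != 0 -> y != 0 ->
     f x ^+ q.-1 = f y ^+ q.-1 -> x ^+ q.-1 = y ^+ q.-1) ->
  bijective f.
Proof.
move=> f_expr; apply: injF_bij => x y fxy.
have f0 : f 0 = 0 by rewrite /fpoly expr0n gtn_eqF // mul0r.
have f_eq0 z : (f z == 0) = (z == 0).
  by have [->|/fpoly_neq0/negbTE//] := eqVneq z 0; rewrite f0 eqxx.
have [x0 | x_neq0] := eqVneq x 0.
  by apply/esym/eqP; rewrite x0 -f_eq0 -fxy x0 f0.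
have y_neq0 : y != 0 by rewrite -f_eq0 -fxy f_eq0.
have [d dq1 xdy] : exists2 d, d ^+ q.-1 = 1 & x = d * y.
  exists (x / y); last by rewrite divfK.
  by rewrite expr_div_n (f_expr x y) ?divff ?expf_neq0 // fxy.
have dr1 : d ^+ r = 1.
  by apply: (mulIf (fpoly_neq0 y_neq0)); rewrite mul1r -fpoly_scale // -xdy.
have q1_gt0 : (0 < q.-1)%N by rewrite -ltnS prednK.
by rewrite xdy (expr_coprime_eq1 q1_gt0 r_coprime dq1 dr1) mul1r.
Qed.

Lemma fpoly_bij_linq j b c (phi : F -> F) :
  (- c) ^+ L != b ^+ L ->
  (forall x, x != 0 -> phi x != 0) ->
  (forall x, x != 0 -> f x ^+ q.-1 = linq q j b c (phi x) ^+ q.-1) ->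
  (forall x y d, x != 0 -> y != 0 -> d ^+ q.-1 = 1 -> phi x = d * phi y ->
     x ^+ q.-1 = y ^+ q.-1) ->
  bijective f.
Proof.
move=> bc_ell phi_neq0 f_linq phi_expr; apply: fpoly_bij_crit => x y x_neq0 y_neq0.
have inj_linq : injective (linq q j b c).
  apply: (linq_inj q_char) => z z_neq0; apply: contra bc_ell.
  move=> /eqP/(linq_eq0 q_char z_neq0) <-.
  by rewrite exprMn -exprM expr_ell_expn ?mulr1.
rewrite !f_linq // => /(linq_expr_eq q_char inj_linq (phi_neq0 _ y_neq0)) [d dq1].
exact: phi_expr.
Qed.

Section Exponent.
Variables (j m : nat).
Hypotheses (shift : forall x : F, x ^+ (m * q ^ j) = x ^+ (m + q.-1))
  (ell_root_m : forall s : F, s ^+ L = 1 -> s ^+ m = 1 -> s = 1).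

Lemma fpoly_bij_pos : (r %% L = m)%N -> bijective f.
Proof.
move=> r_mod; have r_eqm : (r = m %[mod L])%N by rewrite -r_mod modn_mod.
apply: (@fpoly_bij_linq j 1 a (fun x => x ^+ m)).
- by rewrite expr1n.
- by move=> x x_neq0; rewrite expf_neq0.
- move=> x x_neq0; rewrite (fpoly_expr_mod _ x_neq0 r_eqm) /fpoly /linq.
  by rewrite -exprM shift exprD; congr (_ ^+ _); ring.
- by move=> x y d; apply: expr_pred_eq_of_scaled_expr.
Qed.

Lemma fpoly_bij_neg :
  (r %% L = L - (m + q.-1))%N -> (m + q.-1 <= L)%N -> bijective f.
Proof.
move=> r_mod le_L; have r_opp : (r + (m + q.-1) = 0 %[mod L])%N.
  by rewrite mod0n -modnDml r_mod subnK // modnn.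
apply: (@fpoly_bij_linq j a 1 (fun x => x^-1 ^+ m)).
- apply: contra a_ell => /eqP ell_eq.
  by rewrite -mulN1r exprMn -ell_eq -exprMn mulN1r opprK expr1n.
- by move=> x x_neq0; rewrite expf_neq0 ?invr_neq0.
- move=> x x_neq0.
  have xV : x^-1 ^+ q.-1 * x ^+ q.-1 = 1 by rewrite -exprMn mulVf ?expr1n.
  rewrite (fpoly_expr_opp _ x_neq0 r_opp) /linq -exprM shift exprD.
  by congr (_ ^+ _); rewrite -mulrA mulrDr xV; ring.
- move=> x y d /invr_neq0 xV_neq0 /invr_neq0 yV_neq0 dq1 xy.
  move: (expr_pred_eq_of_scaled_expr ell_root_m xV_neq0 yV_neq0 dq1 xy).
  by rewrite !exprVn => /invr_inj.
Qed.

End Exponent.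

End FiniteField.

Theorem corollary3p5 (F : finFieldType) (p k q e r : nat) (a : F) :
  prime p -> (0 < k)%N -> q = (p ^ k)%N ->
  #|F| = (q ^ e)%N ->
  (2 <= e)%N -> (0 < r)%N ->
  a != 0 ->
  (- a) ^+ ell q e != 1 ->
  div.coprime r q.-1 ->
  (((r %% ell q e)%N \in [:: 1%N; (ell q e - q)%N]) ->
     bijective (fpoly q r a)) /\
  (odd e ->
   ((r %% ell q e)%N \in [:: (q ^ (e.+1)./2 + 1)%N; (ell q e - q ^ (e.+1)./2 - q)%N]) ->
     bijective (fpoly q r a)).
Proof.
move=> p_prime k_gt0 qE cardF e_ge2 r_gt0 _ a_ell r_coprime.
have q_gt1 : (1 < q)%N by rewrite qE -(exp1n k) ltn_exp2r // prime_gt1.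
have q_char : [pchar F].-nat q.
  have p_char : p \in [pchar F].
    by apply: (@card_finPcharP _ p (k * e)); rewrite // cardF qE expnM.
  by rewrite qE pnatX (eq_pnat _ (pcharf_eq p_char)) pnat_id.
have bij_pos := fpoly_bij_pos q_gt1 q_char cardF r_gt0 r_coprime a_ell.
have bij_neg := fpoly_bij_neg q_gt1 q_char cardF r_gt0 r_coprime a_ell.
have ell_root1 (s : F) : s ^+ ell q e = 1 -> s ^+ 1 = 1 -> s = 1 by rewrite expr1.
split.
  rewrite !inE => /orP[] /eqP r_mod.
    exact: bij_pos (@expr_shift1 F q q_gt1) ell_root1 r_mod.
  have := expn_add_le_ell q (e_ge2 : (0 < 1 < e)%N); rewrite expn0 expn1 => L_ge.
  by apply: bij_neg (@expr_shift1 F q q_gt1) ell_root1 _ _; lia.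
move=> e_odd; set K := (e.+1)./2.
have KK : (K + K = e.+1)%N by rewrite addnn -[RHS]odd_double_half /= e_odd.
have L_odd : odd (ell q e) by rewrite odd_ell e_odd (odd_gt0 e_odd); case: odd.
have shift := expr_shift_half q_gt1 cardF KK.
have ell_root_half := ell_root_eq1_half q_gt1 cardF L_odd KK.
rewrite !inE => /orP[] /eqP r_mod.
  exact: bij_pos shift ell_root_half r_mod.
have K_bounds : (1 < K < e)%N by lia.
have := expn_add_le_ell q K_bounds; rewrite expn1 => L_ge.
by apply: bij_neg shift ell_root_half _ _; lia.
Qed.
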